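(* Let $G$ be a finite group and let $M,N_1,N_2$ be normal subgroups of $G$. If $(G,N_1,M)$ and $(G,N_2,M)$ are Camina triples, then $(G,N_1\cap N_2,M)$ is a Camina triple.
   Context: For normal subgroups $M,N$ of a finite group $G$, $(G,N,M)$ is a Camina triple if $1<M\le N<G$ and every $g\in G\setminus N$ is conjugate in $G$ to every element of the coset $gM$. *)

From mathcomp Require Import all_boot all_fingroup.
Set Implicit Arguments. Unset Strict Implicit. Unset Printing Implicit Defensive.
Local Open Scope group_scope.

Definition camina_triple (gT : finGroupType) (G N M : {group gT}) : Prop :=
  [/\ M <| G, N <| G, [1] \proper M, M \subset N /\ N \proper G &
      (forall g, g \in G :\: N -> forall m, m \in M -> g * m \in g ^: G)].

From mathcomp Require Import all_boot all_fingroup.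
Set Implicit Arguments. Unset Strict Implicit. Unset Printing Implicit Defensive.
Local Open Scope group_scope.

(* Only the conjugacy condition needs an argument: it is a condition on the
   elements of G \ N, and G \ (N1 :&: N2) is the union of G \ N1 and G \ N2. *)

Definition coset_conjugate_on (gT : finGroupType) (G : {set gT}) (A M : {set gT}) :=
  forall g, g \in A -> forall m, m \in M -> g * m \in g ^: G.

Lemma coset_conjugate_onU (gT : finGroupType) (G A B M : {set gT}) :
  coset_conjugate_on G A M -> coset_conjugate_on G B M ->
  coset_conjugate_on G (A :|: B) M.
Proof. by move=> cA cB g; case/setUP; [exact: cA | exact: cB]. Qed.

Lemma camina_triple_setI (gT : finGroupType) (G M N1 N2 : {group gT}) :
  camina_triple G N1 M -> camina_triple G N2 M ->
  camina_triple G (N1 :&: N2)%G M.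
Proof.
move=> [nMG nN1G ntM [sMN1 ltN1G] conj1] [_ nN2G _ [sMN2 _] conj2].
split=> //; first exact: normalI.
  by split; [rewrite subsetI sMN1 | exact: sub_proper_trans (subsetIl _ _) ltN1G].
by rewrite setDIr; exact: coset_conjugate_onU.
Qed.

Theorem mainTheorem7 (gT : finGroupType) (G M N1 N2 : {group gT}) :
  M <| G -> N1 <| G -> N2 <| G ->
  camina_triple G N1 M -> camina_triple G N2 M ->
  camina_triple G (N1 :&: N2)%G M.
Proof.
(* The normality hypotheses are already part of the Camina triple conditions. *)
by move=> _ _ _; exact: camina_triple_setI.
Qed.
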